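(* Let $B$ be a blueprint and let $I\subseteq B$ be an ideal of $B$ that contains all absorbing elements of $B$. Then $\sim_I$ is a congruence on $B$, its absorbing ideal $I_{\sim_I}$ equals $I$, and $\sim_I$ is the smallest congruence on $B$ whose absorbing ideal is $I$.
   Context: A monoid is a commutative semigroup $A$, written multiplicatively, with neutral element $1$. For a monoid $A$, $\mathbb N[A]$ denotes the semiring of finite formal sums $\sum a_i$ of elements $a_i\in A$ (repetitions allowed), with empty sum $\underline0$ and multiplication extended bilinearly from $A$. A pre-addition on $A$ is a relation $\mathcal R\subseteq\mathbb N[A]\times\mathbb N[A]$, written $\sum a_i\equiv\sum b_j$, which is an equivalence relation and satisfies: if $\sum a_i\equiv\sum b_j$ and $\sum c_k\equiv\sum d_l$, then $\sum a_i+\sum c_k\equiv\sum b_j+\sum d_l$ and $\sum_{i,k}a_ic_k\equiv\sum_{j,l}b_jd_l$. A blueprint $B=(A,\mathcal R)$ is a monoid $A$ with a pre-addition $\mathcal R$; we write $a\in B$ for $a\in A$. An element $e$ with $e\equiv\underline0$ is a zero of $B$; an element $e$ with $eb\equiv e$ for all $b\in B$ is an absorbing element. For an equivalence relation $\sim$ on $A$, its linear extension $\sim_{\mathbb N}$ is the equivalence relation on $\mathbb N[A]$ generated by $\sum_{i=1}^n a_i\sim_{\mathbb N}\sum_{i=1}^n b_i$ whenever $a_i\sim b_i$ for all $i$; and $\sim_{\mathcal R}$ is the smallest equivalence relation on $\mathbb N[A]$ containing both $\mathcal R$ and $\sim_{\mathbb N}$. A congruence on $B$ is an equivalence relation $\sim$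 on $A$ such that (C1) $\sim_{\mathbb N}$ is a pre-addition on $A$, and (C2) the restriction of $\sim_{\mathcal R}$ to $A$ equals $\sim$. The absorbing ideal of a congruence $\sim$ is $I_\sim=\{e\in B: eb\sim e\text{ for all }b\in B\}$. For a subset $I\subseteq B$, let $\sim^I$ be the equivalence relation on $A$ with $a\sim^I b$ iff $a=b$ or $a,b\in I$, and let $\sim_I$ be the relation on $A$ with $a\sim_I b$ iff there is a finite sequence $a\equiv\sum_k c_{1,k}\sim^I_{\mathbb N}\sum_k d_{1,k}\equiv\sum_k c_{2,k}\sim^I_{\mathbb N}\cdots\sim^I_{\mathbb N}\sum_k d_{n,k}\equiv b$ with $c_{i,k},d_{i,k}\in A$ (equivalently, $\sim_I$ is the restriction of $(\sim^I)_{\mathcal R}$ to $A$). An ideal of $B$ is a subset $I\subseteq B$ such that (I1) $ab\in I$ for all $a\in I$, $b\in B$; (I2) every zero of $B$ lies in $I$; (I3) if $a\sim_I b$ and $b\in I$, then $a\in I$. *)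

From Stdlib Require Import List Permutation Relations.
Import ListNotations.
Set Implicit Arguments.

(* Formal sums in N[A] are represented by lists; two lists denote the same
   element of N[A] iff they are permutations of each other.  Relations on
   N[A] correspond exactly to relations on lists that are saturated under
   Permutation (for equivalence relations: that contain Permutation). *)

Section Blueprints.
Variable A : Type.
Variable mul : A -> A -> A.

Definition lmul (l1 l2 : list A) : list A :=
  flat_map (fun a => map (fun c => mul a c) l2) l1.

Definition is_equiv {T : Type} (R : T -> T -> Prop) : Prop :=
  (forall x, R x x) /\ (forall x y, R x y -> R y x) /\
  (forall x y z, R x y -> R y z -> R x z).

(* pre-addition: an equivalence relation on N[A] (i.e. on lists, compatible
   with reordering) closed under sums and products *)
Definition is_preaddition (R : list A -> list A -> Prop) : Prop :=
  is_equiv R /\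
  (forall l1 l2, Permutation l1 l2 -> R l1 l2) /\
  (forall a b c d, R a b -> R c d -> R (a ++ c) (b ++ d)) /\
  (forall a b c d, R a b -> R c d -> R (lmul a c) (lmul b d)).

(* linear extension sim_N of an equivalence relation sim on A:
   equivalence on N[A] generated by sum a_i ~ sum b_i with a_i ~ b_i *)
Definition linext (sim : A -> A -> Prop) : list A -> list A -> Prop :=
  clos_refl_sym_trans (list A)
    (fun l1 l2 => Permutation l1 l2 \/ Forall2 sim l1 l2).

Definition linextR (R : list A -> list A -> Prop) (sim : A -> A -> Prop)
  : list A -> list A -> Prop :=
  clos_refl_sym_trans (list A) (fun l1 l2 => R l1 l2 \/ linext sim l1 l2).
End Blueprints.

Record Blueprint := {
  bp_car :> Type;
  bp_mul : bp_car -> bp_car -> bp_car;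
  bp_one : bp_car;
  bp_mulA : forall a b c, bp_mul a (bp_mul b c) = bp_mul (bp_mul a b) c;
  bp_mulC : forall a b, bp_mul a b = bp_mul b a;
  bp_mul1 : forall a, bp_mul bp_one a = a;
  bp_R : list bp_car -> list bp_car -> Prop;
  bp_R_pre : is_preaddition bp_mul bp_R
}.

Section BlueprintDefs.
Variable B : Blueprint.
Local Notation mul := (bp_mul B).
Local Notation R := (bp_R B).

(* e is a zero: e == 0 (empty sum) *)
Definition is_zero (e : B) : Prop := R [e] [].

Definition is_absorbing (e : B) : Prop := forall b : B, R [mul e b] [e].

Definition congruence (sim : B -> B -> Prop) : Prop :=
  is_equiv sim /\
  is_preaddition mul (linext sim) /\
  (forall a b : B, linextR R sim [a] [b] <-> sim a b).

Definition absorbing_ideal (sim : B -> B -> Prop) (e : B) : Prop :=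
  forall b : B, sim (mul e b) e.

Definition simsup (I : B -> Prop) (a b : B) : Prop :=
  a = b \/ (I a /\ I b).

(* ~_I : restriction of (~^I)_R to A *)
Definition simI (I : B -> Prop) (a b : B) : Prop :=
  linextR R (simsup I) [a] [b].

Definition is_ideal (I : B -> Prop) : Prop :=
  (forall a b : B, I a -> I (mul a b)) /\
  (forall e : B, is_zero e -> I e) /\
  (forall a b : B, simI I a b -> I b -> I a).
End BlueprintDefs.
Arguments is_zero {B}.
Arguments is_absorbing {B}.
Arguments congruence {B}.
Arguments absorbing_ideal {B}.
Arguments simsup {B}.
Arguments simI {B}.
Arguments is_ideal {B}.

From Stdlib Require Import List Permutation Relations Classical.
Import ListNotations.
Set Implicit Arguments.

(* The relation ~_I is the restriction to B of the pre-addition generated by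
   the pre-addition of B and the identification of I to a point; extending such
   a restriction linearly and closing it under the pre-addition again gives
   nothing new, which is axiom (C2).  If e b ~_I e for all b, then for any z in
   I we get e ~_I e z in I, so e is in I by (I3); if I is empty, ~_I is the
   pre-addition itself on B, so e is absorbing and lies in I by hypothesis.
   Finally a congruence ~ with absorbing ideal I identifies x ~ x y ~ y for all
   x, y in I, hence contains ~^I and therefore ~_I. *)

Section Closure.
Variable T : Type.
Implicit Types r q : T -> T -> Prop.

Lemma rst_is_equiv r : is_equiv (clos_refl_sym_trans T r).
Proof.
  split; [|split]; intros.
  - apply rst_refl.
  - now apply rst_sym.
  - eapply rst_trans; eauto.
Qed.

Lemma rst_minimal r q :
  is_equiv q -> (forall x y, r x y -> q x y) ->
  forall x y, clos_refl_sym_trans T r x y -> q x y.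
Proof.
  intros [qrefl [qsym qtrans]] Hrq x y H.
  induction H; eauto.
Qed.

Lemma rst_mono r q :
  (forall x y, r x y -> q x y) ->
  forall x y, clos_refl_sym_trans T r x y -> clos_refl_sym_trans T q x y.
Proof.
  intro Hrq; apply rst_minimal; [apply rst_is_equiv|].
  intros; apply rst_step; auto.
Qed.

Lemma rst_map {U : Type} (f : T -> U) r (q : U -> U -> Prop) :
  (forall x y, r x y -> clos_refl_sym_trans U q (f x) (f y)) ->
  forall x y, clos_refl_sym_trans T r x y -> clos_refl_sym_trans U q (f x) (f y).
Proof.
  intro Hstep; apply (@rst_minimal r (fun x y => clos_refl_sym_trans U q (f x) (f y)));
    [|exact Hstep].
  split; [|split]; intros; [apply rst_refl | now apply rst_sym | eapply rst_trans; eauto].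
Qed.

Lemma rst_compatible (op : T -> T -> T) r :
  (forall a b c, r a b -> clos_refl_sym_trans T r (op a c) (op b c)) ->
  (forall a b c, r a b -> clos_refl_sym_trans T r (op c a) (op c b)) ->
  forall a b c d, clos_refl_sym_trans T r a b -> clos_refl_sym_trans T r c d ->
  clos_refl_sym_trans T r (op a c) (op b d).
Proof.
  intros Hl Hr a b c d Hab Hcd.
  apply rst_trans with (op b c).
  - apply (@rst_map _ (fun x => op x c) r); auto.
  - apply (@rst_map _ (op b) r); auto.
Qed.
End Closure.

Section FormalSums.
Variable A : Type.
Variable mul : A -> A -> A.
Hypothesis mulC : forall a b, mul a b = mul b a.
Local Notation lmul := (lmul mul).

Lemma lmul_cons (x : A) (a c : list A) : lmul (x :: a) c = map (mul x) c ++ lmul a c.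
Proof. reflexivity. Qed.

Lemma Permutation_lmul_l (a b c : list A) :
  Permutation a b -> Permutation (lmul a c) (lmul b c).
Proof.
  induction 1.
  - constructor.
  - rewrite !lmul_cons; now apply Permutation_app_head.
  - rewrite !lmul_cons, !app_assoc; apply Permutation_app_tail, Permutation_app_comm.
  - eapply Permutation_trans; eauto.
Qed.

Lemma Permutation_lmul_r (a b c : list A) :
  Permutation a b -> Permutation (lmul c a) (lmul c b).
Proof.
  intro H; induction c; [constructor|].
  rewrite !lmul_cons; apply Permutation_app; auto; now apply Permutation_map.
Qed.

Definition mul_compatible (s : A -> A -> Prop) : Prop :=
  forall x y z, s x y -> s (mul x z) (mul y z).

Lemma Forall2_reflexive (s : A -> A -> Prop) :
  (forall x, s x x) -> forall l, Forall2 s l l.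
Proof. intros Hs l; induction l; constructor; auto. Qed.

Lemma Forall2_lmul_l (s : A -> A -> Prop) (a b c : list A) :
  mul_compatible s -> Forall2 s a b -> Forall2 s (lmul a c) (lmul b c).
Proof.
  intros Hs; induction 1; [constructor|].
  rewrite !lmul_cons; apply Forall2_app; auto.
  clear IHForall2; induction c; constructor; auto.
Qed.

Lemma Forall2_lmul_r (s : A -> A -> Prop) (a b c : list A) :
  mul_compatible s -> Forall2 s a b -> Forall2 s (lmul c a) (lmul c b).
Proof.
  intros Hs Hab; induction c; [constructor|].
  rewrite !lmul_cons; apply Forall2_app; auto.
  clear IHc; induction Hab; constructor; auto.
  rewrite (mulC a0 x), (mulC a0 y); auto.
Qed.

Lemma linext_preaddition (s : A -> A -> Prop) :
  (forall x, s x x) -> mul_compatible s -> is_preaddition mul (linext s).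
Proof.
  intros Hrefl Hs; unfold linext.
  split; [apply rst_is_equiv|split; [intros; apply rst_step; now left|split]];
    apply rst_compatible; intros a b c [H|H]; apply rst_step.
  - left; now apply Permutation_app_tail.
  - right; auto using Forall2_app, Forall2_reflexive.
  - left; now apply Permutation_app_head.
  - right; auto using Forall2_app, Forall2_reflexive.
  - left; now apply Permutation_lmul_l.
  - right; now apply Forall2_lmul_l.
  - left; now apply Permutation_lmul_r.
  - right; now apply Forall2_lmul_r.
Qed.

Lemma rst_union_preaddition (P Q : list A -> list A -> Prop) :
  is_preaddition mul P -> is_preaddition mul Q ->
  is_preaddition mul (clos_refl_sym_trans (list A) (fun x y => P x y \/ Q x y)).
Proof.
  intros [[Prefl _] [Pperm [Papp Pmul]]] [[Qrefl _] [_ [Qapp Qmul]]].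
  split; [apply rst_is_equiv|split; [intros; apply rst_step; left; auto|split]];
    apply rst_compatible; intros a b c [H|H]; apply rst_step; auto.
Qed.

Lemma linextR_preaddition (R : list A -> list A -> Prop) (s : A -> A -> Prop) :
  is_preaddition mul R -> (forall x, s x x) -> mul_compatible s ->
  is_preaddition mul (linextR R s).
Proof.
  intros HR Hrefl Hs.
  exact (rst_union_preaddition HR (linext_preaddition Hrefl Hs)).
Qed.

Lemma linextR_mono (R : list A -> list A -> Prop) (s1 s2 : A -> A -> Prop) :
  (forall x y, s1 x y -> s2 x y) ->
  forall l1 l2, linextR R s1 l1 l2 -> linextR R s2 l1 l2.
Proof.
  intro Hs; apply rst_mono; intros l1 l2 [H|H]; [now left | right].
  revert H; apply rst_mono; intros x y [H|H]; [now left | right].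
  exact (Forall2_impl _ Hs H).
Qed.

Lemma linextR_of_discrete (R : list A -> list A -> Prop) (s : A -> A -> Prop) :
  is_preaddition mul R -> (forall x y, s x y -> x = y) ->
  forall l1 l2, linextR R s l1 l2 -> R l1 l2.
Proof.
  intros [Requiv [Rperm _]] Hs; pose proof Requiv as [Rrefl _].
  apply rst_minimal; auto; intros l1 l2 [H|H]; auto.
  revert H; apply rst_minimal; auto; intros x y [H|H]; auto.
  assert (x = y) as <- by (induction H; f_equal; auto).
  apply Rrefl.
Qed.
End FormalSums.

Section Restriction.
Variable B : Blueprint.
Local Notation mul := (bp_mul B).
Local Notation R := (bp_R B).

Definition restrictR (s : B -> B -> Prop) (a b : B) : Prop := linextR R s [a] [b].

Variable s : B -> B -> Prop.
Hypothesis s_refl : forall x, s x x.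
Hypothesis s_mul : mul_compatible mul s.

Lemma linextR_restrictR l1 l2 : linextR R (restrictR s) l1 l2 -> linextR R s l1 l2.
Proof.
  pose proof (linextR_preaddition (bp_mulC B) (bp_R_pre B) s_refl s_mul)
    as [Lequiv [Lperm [Lapp _]]].
  apply rst_minimal; auto; intros k1 k2 [H|H]; [now apply rst_step; left|].
  revert H; apply rst_minimal; auto; intros x y [H|H]; auto.
  induction H as [|a b k k' Hab _ IH]; [apply rst_refl|].
  exact (Lapp [a] [b] k k' Hab IH).
Qed.

Lemma congruence_restrictR : congruence (restrictR s).
Proof.
  pose proof (linextR_preaddition (bp_mulC B) (bp_R_pre B) s_refl s_mul)
    as [[Lrefl [Lsym Ltrans]] [_ [_ Lmul]]].
  assert (restr_mul : mul_compatible mul (restrictR s)).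
  { intros x y z H; exact (Lmul [x] [y] [z] [z] H (rst_refl _ _ _)). }
  split; [|split].
  - split; [|split]; unfold restrictR; intros; [apply Lrefl | now apply Lsym | eauto].
  - exact (linext_preaddition (bp_mulC B) (fun x => rst_refl _ _ _) restr_mul).
  - intros a b; split; [apply linextR_restrictR|].
    intro H; do 2 (apply rst_step; right); now apply Forall2_cons.
Qed.
End Restriction.
Arguments restrictR {B}.

Lemma restrictR_le_congruence (B : Blueprint) (s sim : B -> B -> Prop) :
  congruence sim -> (forall x y, s x y -> sim x y) ->
  forall a b, restrictR s a b -> sim a b.
Proof.
  intros [_ [_ Hsim]] Hs a b H.
  apply Hsim; eapply linextR_mono; [exact Hs | exact H].
Qed.

Section AbsorbingIdeal.
Variable B : Blueprint.
Local Notation mul := (bp_mul B).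
Variable I : B -> Prop.
Hypothesis I_mul : forall a b : B, I a -> I (mul a b).

Lemma simsup_mul_compatible : mul_compatible mul (simsup I).
Proof. intros x y z [->|[Hx Hy]]; [now left | right; auto]. Qed.

Lemma absorbing_ideal_simI :
  (forall a b : B, simI I a b -> I b -> I a) ->
  (forall e : B, is_absorbing e -> I e) ->
  forall e : B, absorbing_ideal (simI I) e <-> I e.
Proof.
  intros I_closed I_abs e; split.
  - intro He; destruct (classic (exists z, I z)) as [[z Hz]|Inil].
    + apply (I_closed e (mul e z)); [apply rst_sym, He|].
      rewrite bp_mulC; auto.
    + apply I_abs; intro b.
      refine (linextR_of_discrete (bp_R_pre B) _ (He b)).
      intros x y [->|[Hx _]]; [reflexivity | exfalso; eauto].
  - intros He b; do 2 (apply rst_step; right).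
    apply Forall2_cons; [right; auto | constructor].
Qed.

Lemma simsup_le_congruence (sim : B -> B -> Prop) :
  is_equiv sim -> (forall e, I e -> absorbing_ideal sim e) ->
  forall x y, simsup I x y -> sim x y.
Proof.
  intros [sim_refl [sim_sym sim_trans]] Habs x y [->|[Hx Hy]]; auto.
  apply (sim_trans x (mul x y) y); [now apply sim_sym, Habs|].
  rewrite bp_mulC; now apply Habs.
Qed.
End AbsorbingIdeal.

Theorem mainTheorem9 (B : Blueprint) (I : B -> Prop)
  (HI : is_ideal I)
  (Habs : forall e : B, is_absorbing e -> I e) :
  congruence (simI I) /\
  (forall e : B, absorbing_ideal (simI I) e <-> I e) /\
  (forall sim : B -> B -> Prop, congruence sim ->
     (forall e : B, absorbing_ideal sim e <-> I e) ->
     forall a b : B, simI I a b -> sim a b).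
Proof.
  destruct HI as [I_mul [_ I_closed]].
  assert (simsup_refl : forall x, simsup I x x) by now left.
  split; [|split].
  - exact (congruence_restrictR _ simsup_refl (simsup_mul_compatible I_mul)).
  - exact (absorbing_ideal_simI I_mul I_closed Habs).
  - intros sim Hsim HabsI.
    apply restrictR_le_congruence; auto.
    apply simsup_le_congruence; [apply Hsim | intro e; apply HabsI].
Qed.
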